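(* Let $F\in\Gamma_0^s(\mathbb{R}_+)$ and $a\in(0,1]$. If $(\hat F)^a$ satisfies the triangle inequality on $[0,+\infty)$, i.e. $\hat F^a(r,t)\le \hat F^a(r,s)+\hat F^a(s,t)$ for all $r,s,t\ge0$, then $T_a(F)(s)\ge F(s)$ for every $s\ge 0$.
   Context: $\Gamma_0(\mathbb{R}_+)$ is the set of functions $F:[0,\infty)\to[0,\infty]$ that are convex, lower semicontinuous, with $F(1)=0$. For $F\in\Gamma_0(\mathbb{R}_+)$: $\mathrm{rec}(F)(r)=\lim_{\alpha\to\infty}F(1+\alpha r)/\alpha$, $F'_\infty:=\mathrm{rec}(F)(1)$; the perspective function is $\hat F(r,t)=tF(r/t)$ for $t>0$, $\hat F(r,0)=\mathrm{rec}(F)(r)$; the reverse entropy is $R(s)=sF(1/s)$ for $s>0$, $R(0)=F'_\infty$. $\Gamma_0^s(\mathbb{R}_+)$ is the set of $F\in\Gamma_0(\mathbb{R}_+)$ with $F=R$; for such $F$, $\hat F(r,t)=\hat F(t,r)$ and $\hat F(1,t)=F(t)$. The marginal perspective function $H_F$ is the lower semicontinuous envelope of $\tilde H_F(r_1,r_2)=\inf_{\theta>0}[\hat F(\theta,r_1)+\hat F(\theta,r_2)]$. For $a\in(0,1]$, $T_a:\Gamma_0(\mathbb{R}_+)\to\Gamma_0^s(\mathbb{R}_+)$ is $T_a(F)(s)=2^{1/a-1}H_F(1,s)$. *)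

From Stdlib Require Import Reals Lra Classical ClassicalEpsilon.
Open Scope R_scope.

(* Extended reals R ∪ {+oo} (values of F are in [0,+oo]). *)
Inductive ER : Type := Fin (x : R) | PInf.

Definition ele (x y : ER) : Prop :=
  match x, y with
  | _, PInf => True
  | PInf, Fin _ => False
  | Fin a, Fin b => a <= b
  end.

Definition eltR (c : R) (x : ER) : Prop :=
  match x with PInf => True | Fin b => c < b end.

Definition eplus (x y : ER) : ER :=
  match x, y with Fin a, Fin b => Fin (a + b) | _, _ => PInf end.

(* scaling by a real c; only used with c > 0, so c * (+oo) = +oo *)
Definition escal (c : R) (x : ER) : ER :=
  match x with Fin a => Fin (c * a) | PInf => PInf end.

(* x^a for x in [0,+oo], a > 0, with 0^a = 0 and (+oo)^a = +oo *)
Definition epow (x : ER) (a : R) : ER :=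
  match x with
  | PInf => PInf
  | Fin b => Fin (if Rle_dec b 0 then 0 else Rpower b a)
  end.

Definition eglb (P : ER -> Prop) : ER :=
  epsilon (inhabits PInf)
    (fun m => (forall x, P x -> ele m x) /\
              (forall m', (forall x, P x -> ele m' x) -> ele m' m)).
Definition elub (P : ER -> Prop) : ER :=
  epsilon (inhabits PInf)
    (fun m => (forall x, P x -> ele x m) /\
              (forall m', (forall x, P x -> ele x m') -> ele m m')).

(* Functions F : [0,oo) -> [0,oo] are represented as R -> ER; only
   arguments >= 0 matter. *)
Definition nonneg_valued (F : R -> ER) : Prop :=
  forall x, 0 <= x -> ele (Fin 0) (F x).

Definition convex_on_Rplus (F : R -> ER) : Prop :=
  forall x y l, 0 <= x -> 0 <= y -> 0 < l < 1 ->
    ele (F (l * x + (1 - l) * y)) (eplus (escal l (F x)) (escal (1 - l) (F y))).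

Definition lsc_on_Rplus (F : R -> ER) : Prop :=
  forall x c, 0 <= x -> eltR c (F x) ->
    exists d, 0 < d /\ forall y, 0 <= y -> Rabs (y - x) < d -> eltR c (F y).

Definition Gamma0 (F : R -> ER) : Prop :=
  nonneg_valued F /\ convex_on_Rplus F /\ lsc_on_Rplus F /\ F 1 = Fin 0.

Definition elim_infty (g : R -> ER) (l : ER) : Prop :=
  match l with
  | Fin L => forall eps, 0 < eps -> exists M, forall al, M < al ->
               exists v, g al = Fin v /\ Rabs (v - L) < eps
  | PInf => forall K, exists M, forall al, M < al -> eltR K (g al)
  end.

Definition recF (F : R -> ER) (r : R) : ER :=
  epsilon (inhabits PInf)
    (fun l => elim_infty (fun al => escal (/ al) (F (1 + al * r))) l).

Definition Finf (F : R -> ER) : ER := recF F 1.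

Definition persp (F : R -> ER) (r t : R) : ER :=
  if Rlt_dec 0 t then escal t (F (r / t)) else recF F r.

Definition reventropy (F : R -> ER) (s : R) : ER :=
  if Rlt_dec 0 s then escal s (F (/ s)) else Finf F.

Definition Gamma0s (F : R -> ER) : Prop :=
  Gamma0 F /\ forall s, 0 <= s -> F s = reventropy F s.

Definition Htilde (F : R -> ER) (r1 r2 : R) : ER :=
  eglb (fun v => exists th, 0 < th /\ v = eplus (persp F th r1) (persp F th r2)).

Definition lsc2_on_Rplus (g : R -> R -> ER) : Prop :=
  forall x1 x2 c, 0 <= x1 -> 0 <= x2 -> eltR c (g x1 x2) ->
    exists d, 0 < d /\ forall y1 y2, 0 <= y1 -> 0 <= y2 ->
      Rabs (y1 - x1) < d -> Rabs (y2 - x2) < d -> eltR c (g y1 y2).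

(* H_F = lower semicontinuous envelope of tilde H_F on [0,oo)^2:
   pointwise supremum of all lsc minorants *)
Definition HF (F : R -> ER) (r1 r2 : R) : ER :=
  elub (fun v => exists g, lsc2_on_Rplus g /\
          (forall y1 y2, 0 <= y1 -> 0 <= y2 -> ele (g y1 y2) (Htilde F y1 y2)) /\
          v = g r1 r2).

Definition Ta (a : R) (F : R -> ER) (s : R) : ER :=
  escal (Rpower 2 (/ a - 1)) (HF F 1 s).

(* Write C = 2^(1/a - 1).  The argument has three ingredients.
   (1) A real inequality: by concavity of x |-> x^a, A^a + B^a <= 2^(1-a) (A+B)^a,
       so x^a <= A^a + B^a forces x <= C (A + B).
   (2) For symmetric F (F = R), the perspective satisfies hat F(r,t) = r F(t/r)
       for r > 0, t >= 0 (for t = 0 this uses the positive homogeneity of the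
       recession function rec(F)).  Hence hat F is symmetric on (0,oo)^2 and lower
       semicontinuous at every point (1,s), because F is.
   (3) By the triangle inequality of hat F^a through an intermediate theta > 0 and
       symmetry, hat F(y1,y2) <= C (hat F(theta,y1) + hat F(theta,y2)), hence
       hat F(y1,y2) <= C tilde H_F(y1,y2).
   Given w < F(s) = hat F(1,s), (2) yields a box around (1,s) on which hat F > w,
   so tilde H_F >= w/C there by (3); the indicator of that box, scaled by w/C, is
   a lower semicontinuous minorant of tilde H_F, so H_F(1,s) >= w/C.  Letting w
   tend to F(s) gives F(s) <= C H_F(1,s) = T_a(F)(s). *)

From Stdlib Require Import Reals Lra Classical ClassicalEpsilon.
Open Scope R_scope.

(** * The real inequality *)

Definition rpow0 (b a : R) : R := if Rle_dec b 0 then 0 else Rpower b a.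

Lemma Rpower_bernoulli a t : 0 < a <= 1 -> 0 < t -> Rpower t a <= 1 + a * (t - 1).
Proof.
  intros Ha Ht.
  set (m := 1 + a * (t - 1)).
  assert (Hm : 0 < m) by (unfold m; nra).
  assert (Hln : forall x, 0 < x -> ln x <= x - 1).
  { intros x Hx. pose proof (exp_ineq1_le (ln x)) as H. rewrite exp_ln in H; lra. }
  (* a ln(t/m) + (1-a) ln(1/m) <= a (t/m - 1) + (1-a) (1/m - 1) = 0 *)
  pose proof (Hln (t * / m) ltac:(apply Rmult_lt_0_compat; [lra | apply Rinv_0_lt_compat; lra])) as H1.
  pose proof (Hln (/ m) ltac:(apply Rinv_0_lt_compat; lra)) as H2.
  rewrite ln_mult, ln_Rinv in H1 by (try apply Rinv_0_lt_compat; lra).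
  rewrite ln_Rinv in H2 by lra.
  assert (Hw : a * (t * / m) + (1 - a) * / m = 1) by (unfold m in *; field; lra).
  assert (E1 : a * (ln t + - ln m) <= a * (t * / m - 1)) by (apply Rmult_le_compat_l; lra).
  assert (E2 : (1 - a) * - ln m <= (1 - a) * (/ m - 1)) by (apply Rmult_le_compat_l; lra).
  assert (Hlog : a * ln t <= ln m) by lra.
  unfold Rpower. rewrite <- (exp_ln m) by lra.
  destruct Hlog as [Hlt | ->]; [left; apply exp_increasing |]; lra.
Qed.

Lemma rpow0_tangent a A m : 0 < a <= 1 -> 0 <= A -> 0 < m ->
  rpow0 A a <= Rpower m a * (1 + a * (A / m - 1)).
Proof.
  intros Ha HA Hm.
  assert (Hma : 0 < Rpower m a) by (unfold Rpower; apply exp_pos).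
  unfold rpow0. destruct (Rle_dec A 0).
  - replace A with 0 by lra. unfold Rdiv. rewrite Rmult_0_l. nra.
  - replace A with (m * (A / m)) at 1 by (field; lra).
    rewrite <- Rpower_mult_distr by (try apply Rdiv_lt_0_compat; lra).
    apply Rmult_le_compat_l; [lra |].
    apply Rpower_bernoulli; [lra | apply Rdiv_lt_0_compat; lra].
Qed.

Lemma rpow0_sum_le a A B : 0 < a <= 1 -> 0 <= A -> 0 <= B -> 0 < A + B ->
  rpow0 A a + rpow0 B a <= 2 * Rpower ((A + B) / 2) a.
Proof.
  intros Ha HA HB HAB.
  set (m := (A + B) / 2).
  assert (Hm : 0 < m) by (unfold m; lra).
  pose proof (rpow0_tangent a A m Ha HA Hm).
  pose proof (rpow0_tangent a B m Ha HB Hm).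
  assert (Rpower m a * (1 + a * (A / m - 1)) + Rpower m a * (1 + a * (B / m - 1))
          = 2 * Rpower m a) by (unfold m; field; lra).
  lra.
Qed.

Lemma rpow0_triangle_inv a x A B : 0 < a <= 1 -> 0 <= A -> 0 <= B ->
  rpow0 x a <= rpow0 A a + rpow0 B a -> x <= Rpower 2 (/ a - 1) * (A + B).
Proof.
  intros Ha HA HB Hx.
  assert (HC : 0 < Rpower 2 (/ a - 1)) by (unfold Rpower; apply exp_pos).
  destruct (Rle_dec x 0) as [Hx0 | Hx0]; [nra |].
  assert (Hxa : rpow0 x a = Rpower x a) by (unfold rpow0; destruct (Rle_dec x 0); lra).
  assert (Hxa0 : 0 < Rpower x a) by (unfold Rpower; apply exp_pos).
  rewrite Hxa in Hx.
  assert (HAB : 0 < A + B).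
  { destruct (Rle_dec (A + B) 0) as [H0 | H0]; [| lra].
    replace A with 0 in Hx by lra. replace B with 0 in Hx by lra.
    unfold rpow0 in Hx. destruct (Rle_dec 0 0); lra. }
  set (m := (A + B) / 2).
  assert (Hm : 0 < m) by (unfold m; lra).
  assert (Hle : Rpower x a <= 2 * Rpower m a).
  { pose proof (rpow0_sum_le a A B Ha HA HB HAB). unfold m. lra. }
  (* raise both sides to the power 1/a *)
  pose proof (Rle_Rpower_l _ _ (/ a) ltac:(left; apply Rinv_0_lt_compat; lra)
    (conj Hxa0 Hle)) as Hroot.
  rewrite Rpower_mult, Rinv_r, Rpower_1 in Hroot by lra.
  rewrite <- Rpower_mult_distr, Rpower_mult, Rinv_r, Rpower_1 in Hroot
    by (try lra; unfold Rpower; apply exp_pos).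
  unfold Rminus. rewrite Rpower_plus, Rpower_Ropp, Rpower_1 by lra.
  replace (Rpower 2 (/ a) * / 2 * (A + B)) with (Rpower 2 (/ a) * m) by (unfold m; field).
  exact Hroot.
Qed.

Lemma ele_trans x y z : ele x y -> ele y z -> ele x z.
Proof. destruct x, y, z; simpl; auto; try lra; tauto. Qed.

Lemma eltR_ele_trans c x y : eltR c x -> ele x y -> eltR c y.
Proof. destruct x, y; simpl; auto; try lra; tauto. Qed.

Lemma eltR_ele c x : eltR c x -> ele (Fin c) x.
Proof. destruct x; simpl; auto; lra. Qed.

Lemma eltR_gap w x : eltR w x -> exists w', w < w' /\ eltR w' x.
Proof.
  destruct x as [v |]; simpl; intros H.
  - exists ((w + v) / 2). lra.
  - exists (w + 1). lra.
Qed.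

Lemma epow_triangle_inv a x A B : 0 < a <= 1 -> ele (Fin 0) A -> ele (Fin 0) B ->
  ele (epow x a) (eplus (epow A a) (epow B a)) ->
  ele x (escal (Rpower 2 (/ a - 1)) (eplus A B)).
Proof.
  intros Ha HA HB H.
  destruct A as [A |]; [| destruct x; simpl; auto].
  destruct B as [B |]; [| destruct x; simpl; auto].
  destruct x as [x |]; simpl in *; [| contradiction].
  exact (rpow0_triangle_inv a x A B Ha HA HB H).
Qed.

Lemma ele_escal_div C w x : 0 < C -> ele (Fin w) (escal C x) -> ele (Fin (w / C)) x.
Proof.
  intros HC. destruct x as [v |]; simpl; auto. intros H.
  apply (Rmult_le_reg_l C); auto. replace (C * (w / C)) with w by (field; lra). exact H.
Qed.

Lemma ele_escal_of_lower_bounds C x y : 0 < C -> ele (Fin 0) y ->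
  (forall w, 0 < w -> eltR w x -> ele (Fin (w / C)) y) -> ele x (escal C y).
Proof.
  intros HC Hy H.
  destruct x as [f |]; destruct y as [h |]; simpl in *; auto.
  - destruct (Rle_dec f (C * h)) as [| Hf]; auto. exfalso.
    assert (HCh : 0 <= C * h) by nra.
    specialize (H ((f + C * h) / 2) ltac:(lra) ltac:(lra)).
    apply (Rmult_le_compat_l C) in H; [| lra].
    replace (C * ((f + C * h) / 2 / C)) with ((f + C * h) / 2) in H by (field; lra).
    lra.
  - specialize (H (C * (h + 1)) ltac:(nra) I).
    replace (C * (h + 1) / C) with (h + 1) in H by (field; lra). lra.
Qed.

Lemma elub_spec (P : ER -> Prop) : (exists x, P x) ->
  (forall x, P x -> ele x (elub P)) /\
  (forall m, (forall x, P x -> ele x m) -> ele (elub P) m).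
Proof.
  intros [x0 Hx0]. unfold elub. apply epsilon_spec.
  destruct (classic (exists K, forall x, P x -> ele x (Fin K))) as [[K HK] | Hn].
  - set (E := fun y => P (Fin y)).
    assert (Hne : exists y, E y).
    { destruct x0 as [b |]; [exists b; exact Hx0 | destruct (HK _ Hx0)]. }
    destruct (completeness E (ex_intro _ K (fun y Hy => HK _ Hy)) Hne) as [l [Hub Hlub]].
    exists (Fin l). split.
    + intros [x |] Hx; [exact (Hub _ Hx) | destruct (HK _ Hx)].
    + intros [c |] Hc; simpl; auto. apply Hlub. intros y Hy. exact (Hc _ Hy).
  - exists PInf. split.
    + intros [x |] _; exact I.
    + intros [c |] Hc; simpl; auto. apply Hn. exists c. exact Hc.
Qed.

Lemma eglb_spec (P : ER -> Prop) : (forall x, P x -> ele (Fin 0) x) ->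
  (forall x, P x -> ele (eglb P) x) /\
  (forall m, (forall x, P x -> ele m x) -> ele m (eglb P)).
Proof.
  intros H0. unfold eglb. apply epsilon_spec.
  destruct (classic (exists b, P (Fin b))) as [[b Hb] | Hn].
  - set (E := fun y => P (Fin (- y))).
    assert (Hbd : bound E).
    { exists 0. intros y Hy. specialize (H0 _ Hy). simpl in H0. lra. }
    assert (Hne : exists y, E y) by (exists (- b); unfold E; rewrite Ropp_involutive; exact Hb).
    destruct (completeness E Hbd Hne) as [l [Hub Hlub]].
    exists (Fin (- l)). split.
    + intros [x |] Hx; simpl; auto.
      assert (E (- x)) by (unfold E; rewrite Ropp_involutive; exact Hx).
      specialize (Hub _ H). lra.
    + intros [c |] Hc; simpl.
      * assert (Hu : is_upper_bound E (- c)).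
        { intros y Hy. specialize (Hc _ Hy). simpl in Hc. lra. }
        specialize (Hlub _ Hu). lra.
      * exact (Hc _ Hb).
  - exists PInf. split.
    + intros [x |] Hx; simpl; auto. apply Hn. eauto.
    + intros [m |] _; exact I.
Qed.

(** * Limits at +oo *)

Lemma elim_infty_nondecreasing (g : R -> ER) :
  (forall al be, 0 < al <= be -> ele (g al) (g be)) -> exists l, elim_infty g l.
Proof.
  intros Hmono.
  destruct (classic (forall K, exists al, 0 < al /\ eltR K (g al))) as [Hunb | Hbd].
  - exists PInf. intros K. destruct (Hunb K) as [al0 [Hal0 HK]]. exists al0.
    intros al Hal. apply (eltR_ele_trans K (g al0)); auto. apply Hmono; lra.
  - apply not_all_ex_not in Hbd. destruct Hbd as [K HK].
    assert (HK' : forall al, 0 < al -> exists v, g al = Fin v /\ v <= K).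
    { intros al Hal. destruct (g al) as [v |] eqn:Ev.
      - exists v. split; auto. apply Rnot_lt_le. intros Hv. apply HK. exists al.
        rewrite Ev. simpl. auto.
      - exfalso. apply HK. exists al. rewrite Ev. simpl. auto. }
    set (E := fun v => exists al, 0 < al /\ g al = Fin v).
    assert (Hub0 : bound E).
    { exists K. intros v [al [Hal Hv]]. destruct (HK' al Hal) as [v' [Hv' Hle]].
      rewrite Hv in Hv'. injection Hv' as ->. exact Hle. }
    assert (Hne : exists v, E v).
    { destruct (HK' 1 ltac:(lra)) as [v [Hv _]]. exists v, 1. split; auto; lra. }
    destruct (completeness E Hub0 Hne) as [L [Hub Hlub]].
    exists (Fin L). intros eps Heps.
    (* some value exceeds L - eps, and all later values lie in (L - eps, L] *)
    assert (Hex : exists al0 v0, 0 < al0 /\ g al0 = Fin v0 /\ L - eps < v0).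
    { apply NNPP. intros Hn.
      assert (Hu : is_upper_bound E (L - eps)).
      { intros v [al [Hal Hv]]. apply Rnot_lt_le. intros Hlt. apply Hn. eauto. }
      specialize (Hlub _ Hu). lra. }
    destruct Hex as [al0 [v0 [Hal0 [Hv0 Hlt]]]].
    exists al0. intros al Hal.
    destruct (HK' al ltac:(lra)) as [v [Hv _]]. exists v. split; auto.
    assert (Hvl : v <= L) by (apply Hub; exists al; split; auto; lra).
    pose proof (Hmono al0 al ltac:(lra)) as Hm. rewrite Hv0, Hv in Hm. simpl in Hm.
    apply Rabs_def1; lra.
Qed.

Lemma elim_infty_unique (g : R -> ER) l1 l2 :
  elim_infty g l1 -> elim_infty g l2 -> l1 = l2.
Proof.
  assert (Hfin : forall L, elim_infty g (Fin L) -> ~ elim_infty g PInf).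
  { intros L H1 H2. destruct (H1 1 ltac:(lra)) as [M1 HM1]. destruct (H2 (L + 1)) as [M2 HM2].
    set (al := Rmax M1 M2 + 1).
    destruct (HM1 al ltac:(unfold al; pose proof (Rmax_l M1 M2); lra)) as [v [Hv Hvl]].
    pose proof (HM2 al ltac:(unfold al; pose proof (Rmax_r M1 M2); lra)) as Hw.
    rewrite Hv in Hw. simpl in Hw. apply Rabs_def2 in Hvl. lra. }
  assert (Hlt : forall L1 L2, elim_infty g (Fin L1) -> elim_infty g (Fin L2) -> ~ L1 < L2).
  { intros L1 L2 H1 H2 Hl.
    destruct (H1 ((L2 - L1) / 2) ltac:(lra)) as [M1 HM1].
    destruct (H2 ((L2 - L1) / 2) ltac:(lra)) as [M2 HM2].
    set (al := Rmax M1 M2 + 1).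
    destruct (HM1 al ltac:(unfold al; pose proof (Rmax_l M1 M2); lra)) as [v1 [Hv1 Hl1]].
    destruct (HM2 al ltac:(unfold al; pose proof (Rmax_r M1 M2); lra)) as [v2 [Hv2 Hl2]].
    rewrite Hv1 in Hv2. injection Hv2 as <-.
    apply Rabs_def2 in Hl1. apply Rabs_def2 in Hl2. lra. }
  intros H1 H2. destruct l1 as [L1 |], l2 as [L2 |].
  - f_equal. destruct (Rtotal_order L1 L2) as [H | [H | H]]; auto.
    + exfalso; exact (Hlt _ _ H1 H2 H).
    + exfalso; exact (Hlt _ _ H2 H1 H).
  - exfalso; exact (Hfin _ H1 H2).
  - exfalso; exact (Hfin _ H2 H1).
  - reflexivity.
Qed.

Lemma elim_infty_rescale (g h : R -> ER) r l : 0 < r ->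
  (forall al, 0 < al -> g al = escal r (h (al * r))) ->
  elim_infty h l -> elim_infty g (escal r l).
Proof.
  intros Hr Hgh Hh.
  assert (Hfar : forall M al, Rmax (M / r) 0 < al -> 0 < al /\ M < al * r).
  { intros M al Hal. pose proof (Rmax_l (M / r) 0). pose proof (Rmax_r (M / r) 0).
    split; [lra |]. assert (HMr : M / r < al) by lra.
    apply (Rmult_lt_compat_r r) in HMr; auto.
    replace (M / r * r) with M in HMr by (field; lra). exact HMr. }
  destruct l as [L |]; simpl in *.
  - intros eps Heps. destruct (Hh (eps / r) ltac:(apply Rdiv_lt_0_compat; lra)) as [M HM].
    exists (Rmax (M / r) 0). intros al Hal. destruct (Hfar M al Hal) as [Hal0 HalM].
    destruct (HM _ HalM) as [v [Hv Hvl]]. exists (r * v).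
    rewrite Hgh, Hv by lra. split; auto.
    replace (r * v - r * L) with (r * (v - L)) by ring.
    rewrite Rabs_mult, (Rabs_pos_eq r) by lra.
    apply (Rmult_lt_compat_l r) in Hvl; auto.
    replace (r * (eps / r)) with eps in Hvl by (field; lra). exact Hvl.
  - intros K. destruct (Hh (K / r)) as [M HM].
    exists (Rmax (M / r) 0). intros al Hal. destruct (Hfar M al Hal) as [Hal0 HalM].
    rewrite Hgh by lra. specialize (HM _ HalM).
    destruct (h (al * r)) as [v |]; simpl in *; auto.
    apply (Rmult_lt_compat_l r) in HM; auto.
    replace (r * (K / r)) with K in HM by (field; lra). exact HM.
Qed.

(** * The recession function *)

Definition rec_quotient (F : R -> ER) (r al : R) : ER := escal (/ al) (F (1 + al * r)).

(* Convexity and F(1) = 0 make the quotient nondecreasing in al, for r >= 0. *)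
Lemma rec_quotient_mono F r al be : Gamma0 F -> 0 <= r -> 0 < al <= be ->
  ele (rec_quotient F r al) (rec_quotient F r be).
Proof.
  intros [_ [Hcv [_ H1]]] Hr Hab. unfold rec_quotient.
  destruct (Req_dec al be) as [<- | Hne].
  { destruct (F (1 + al * r)); simpl; lra. }
  assert (Hl : 0 < al / be < 1).
  { split; [apply Rdiv_lt_0_compat; lra |].
    apply (Rmult_lt_reg_r be); [lra |]. unfold Rdiv. rewrite Rmult_assoc, Rinv_l; lra. }
  (* 1 + al r is the convex combination of 1 + be r and 1 with weight al/be *)
  specialize (Hcv (1 + be * r) 1 (al / be) ltac:(nra) ltac:(lra) Hl).
  replace (al / be * (1 + be * r) + (1 - al / be) * 1) with (1 + al * r) in Hcv
    by (field; lra).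
  rewrite H1 in Hcv.
  destruct (F (1 + be * r)) as [v |], (F (1 + al * r)) as [u |]; simpl in *; auto.
  replace (/ be * v) with (/ al * (al / be * v + (1 - al / be) * 0)) by (field; lra).
  apply Rmult_le_compat_l; [left; apply Rinv_0_lt_compat |]; lra.
Qed.

Lemma recF_spec F r : Gamma0 F -> 0 <= r -> elim_infty (rec_quotient F r) (recF F r).
Proof.
  intros HG Hr. unfold recF. apply epsilon_spec.
  apply elim_infty_nondecreasing. intros al be Hab. exact (rec_quotient_mono F r al be HG Hr Hab).
Qed.

Lemma recF_homogeneous F r : Gamma0 F -> 0 < r -> recF F r = escal r (recF F 1).
Proof.
  intros HG Hr. apply (elim_infty_unique (rec_quotient F r)).
  - apply recF_spec; auto; lra.
  - apply (elim_infty_rescale _ (rec_quotient F 1)); auto.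
    + intros al Hal. unfold rec_quotient.
      replace (1 + al * r * 1) with (1 + al * r) by ring.
      destruct (F (1 + al * r)); simpl; auto. f_equal. field. lra.
    + apply recF_spec; auto; lra.
Qed.

(** * The perspective of a symmetric entropy *)

Lemma persp_transpose F r t : Gamma0s F -> 0 < r -> 0 <= t ->
  persp F r t = escal r (F (t / r)).
Proof.
  intros [HG Hrev] Hr Ht. unfold persp. destruct (Rlt_dec 0 t) as [Ht0 | Ht0].
  - rewrite (Hrev (r / t)) by (left; apply Rdiv_lt_0_compat; lra).
    unfold reventropy. destruct (Rlt_dec 0 (r / t)) as [_ | Hn].
    2: { exfalso; apply Hn; apply Rdiv_lt_0_compat; lra. }
    replace (/ (r / t)) with (t / r) by (field; lra).
    destruct (F (t / r)); simpl; auto. f_equal. field. lra.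
  - replace t with 0 by lra. unfold Rdiv. rewrite Rmult_0_l.
    rewrite (Hrev 0), recF_homogeneous by (auto; lra).
    unfold reventropy. destruct (Rlt_dec 0 0); [lra | reflexivity].
Qed.

Lemma persp_sym F r t : Gamma0s F -> 0 < r -> 0 < t -> persp F r t = persp F t r.
Proof.
  intros HF Hr Ht. rewrite persp_transpose by (auto; lra).
  unfold persp. destruct (Rlt_dec 0 r); [reflexivity | lra].
Qed.

Lemma persp_nonneg F r t : Gamma0s F -> 0 < r -> 0 <= t -> ele (Fin 0) (persp F r t).
Proof.
  intros HF Hr Ht. rewrite persp_transpose by auto.
  destruct HF as [[Hnn _] _].
  assert (Htr : 0 <= t / r) by (apply Rmult_le_pos; [| left; apply Rinv_0_lt_compat]; lra).
  pose proof (Hnn _ Htr). destruct (F (t / r)); simpl in *; auto. nra.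
Qed.

(* Lower semicontinuity of hat F at (1,s), inherited from that of F at s. *)
Lemma persp_lsc_near_1 F s w : Gamma0s F -> 0 <= s -> 0 < w -> eltR w (F s) ->
  exists d, 0 < d /\ forall y1 y2, 0 <= y2 -> Rabs (y1 - 1) < d -> Rabs (y2 - s) < d ->
    0 < y1 /\ eltR w (persp F y1 y2).
Proof.
  intros HF Hs Hw Hws.
  destruct (eltR_gap w _ Hws) as [w2 [Hww2 Hw2]].
  pose proof HF as [[_ [_ [Hlsc _]]] _].
  destruct (Hlsc s w2 Hs Hw2) as [d0 [Hd0 Hnear]].
  assert (Hq : w / w2 < 1).
  { apply (Rmult_lt_reg_l w2); [lra |]. replace (w2 * (w / w2)) with w by (field; lra). lra. }
  assert (Hd0s : 0 < d0 / (2 * (1 + s))) by (apply Rdiv_lt_0_compat; lra).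
  (* d <= 1/2 keeps y1 > 1/2, d <= 1 - w/w2 gives y1 w2 > w, d <= d0/(2(1+s)) gives
     |y2/y1 - s| < d0 *)
  set (d := Rmin (Rmin (1 / 2) (1 - w / w2)) (d0 / (2 * (1 + s)))).
  assert (Hd1 : d <= 1 / 2) by (unfold d; do 2 (eapply Rle_trans; [apply Rmin_l |]); lra).
  assert (Hdw : d <= 1 - w / w2)
    by (unfold d; eapply Rle_trans; [apply Rmin_l | apply Rmin_r]).
  assert (Hdd0 : d <= d0 / (2 * (1 + s))) by (unfold d; apply Rmin_r).
  exists d. split; [unfold d; repeat apply Rmin_glb_lt; lra |].
  intros y1 y2 Hy2 Hb1 Hb2. apply Rabs_def2 in Hb1. apply Rabs_def2 in Hb2.
  assert (Hy1 : 1 / 2 < y1) by lra.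
  split; [lra |].
  assert (Hz : Rabs (y2 / y1 - s) < d0).
  { assert (Hzy : (y2 / y1 - s) * y1 = (y2 - s) - s * (y1 - 1)) by (field; lra).
    assert (Hdd : (1 + s) * d <= d0 / 2).
    { replace (d0 / 2) with ((1 + s) * (d0 / (2 * (1 + s)))) by (field; lra).
      apply Rmult_le_compat_l; lra. }
    assert (Hs1 : s * (y1 - 1) <= s * d) by (apply Rmult_le_compat_l; lra).
    assert (Hs2 : s * - d <= s * (y1 - 1)) by (apply Rmult_le_compat_l; lra).
    apply Rabs_def1; nra. }
  pose proof (Hnear (y2 / y1) ltac:(apply Rmult_le_pos; [| left; apply Rinv_0_lt_compat]; lra) Hz)
    as Hu.
  rewrite persp_transpose by (auto; lra).
  destruct (F (y2 / y1)) as [u |]; simpl in *; auto.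
  assert (Hyw : w < y1 * w2).
  { replace w with (w / w2 * w2) by (field; lra). apply Rmult_lt_compat_r; lra. }
  nra.
Qed.

(** * The marginal perspective function *)

Lemma eplus_nonneg x y : ele (Fin 0) x -> ele (Fin 0) y -> ele (Fin 0) (eplus x y).
Proof. destruct x, y; simpl; auto; lra. Qed.

Lemma Htilde_ge F y1 y2 m : Gamma0s F -> 0 <= y1 -> 0 <= y2 ->
  (forall th, 0 < th -> ele m (eplus (persp F th y1) (persp F th y2))) ->
  ele m (Htilde F y1 y2).
Proof.
  intros HF H1 H2 Hm. unfold Htilde. apply eglb_spec.
  - intros x [th [Hth ->]]. apply eplus_nonneg; apply persp_nonneg; auto.
  - intros x [th [Hth ->]]. auto.
Qed.

Lemma Htilde_nonneg F y1 y2 : Gamma0s F -> 0 <= y1 -> 0 <= y2 ->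
  ele (Fin 0) (Htilde F y1 y2).
Proof.
  intros HF H1 H2. apply Htilde_ge; auto. intros th Hth.
  apply eplus_nonneg; apply persp_nonneg; auto.
Qed.

Lemma HF_ge_minorant F g x1 x2 : lsc2_on_Rplus g ->
  (forall y1 y2, 0 <= y1 -> 0 <= y2 -> ele (g y1 y2) (Htilde F y1 y2)) ->
  ele (g x1 x2) (HF F x1 x2).
Proof.
  intros Hg Hmin. unfold HF. apply elub_spec.
  - exists (g x1 x2), g. auto.
  - exists g. auto.
Qed.

Definition box_ind (x1 x2 d v y1 y2 : R) : ER :=
  if Rlt_dec (Rabs (y1 - x1)) d then
    if Rlt_dec (Rabs (y2 - x2)) d then Fin v else Fin 0
  else Fin 0.

Lemma box_ind_lsc x1 x2 d v : 0 <= v -> lsc2_on_Rplus (box_ind x1 x2 d v).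
Proof.
  intros Hv z1 z2 c _ _ Hc.
  assert (Hneg : c < 0 -> forall y1 y2, eltR c (box_ind x1 x2 d v y1 y2)).
  { intros Hc0 y1 y2. unfold box_ind.
    destruct (Rlt_dec _ d); [destruct (Rlt_dec _ d) |]; simpl; lra. }
  unfold box_ind in Hc.
  destruct (Rlt_dec (Rabs (z1 - x1)) d) as [In1 | Out1];
    [destruct (Rlt_dec (Rabs (z2 - x2)) d) as [In2 | Out2] |];
    [| exists 1; split; [lra | intros; apply Hneg; exact Hc] ..].
  pose proof (Rmin_l (d - Rabs (z1 - x1)) (d - Rabs (z2 - x2))) as He1.
  pose proof (Rmin_r (d - Rabs (z1 - x1)) (d - Rabs (z2 - x2))) as He2.
  set (e := Rmin (d - Rabs (z1 - x1)) (d - Rabs (z2 - x2))) in *.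
  exists e. split; [apply Rmin_glb_lt; lra |].
  intros y1 y2 _ _ Hy1 Hy2. unfold box_ind.
  pose proof (Rabs_triang (y1 - z1) (z1 - x1)) as Ht1.
  pose proof (Rabs_triang (y2 - z2) (z2 - x2)) as Ht2.
  replace (y1 - z1 + (z1 - x1)) with (y1 - x1) in Ht1 by ring.
  replace (y2 - z2 + (z2 - x2)) with (y2 - x2) in Ht2 by ring.
  destruct (Rlt_dec (Rabs (y1 - x1)) d); [| lra].
  destruct (Rlt_dec (Rabs (y2 - x2)) d); [exact Hc | lra].
Qed.

Lemma HF_ge_box F x1 x2 d v : Gamma0s F -> 0 < d -> 0 <= v ->
  (forall y1 y2, 0 <= y1 -> 0 <= y2 -> Rabs (y1 - x1) < d -> Rabs (y2 - x2) < d ->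
     ele (Fin v) (Htilde F y1 y2)) ->
  ele (Fin v) (HF F x1 x2).
Proof.
  intros HF Hd Hv Hbox.
  replace (Fin v) with (box_ind x1 x2 d v x1 x2).
  2: { unfold box_ind. rewrite !Rminus_diag, Rabs_R0.
       destruct (Rlt_dec 0 d); [reflexivity | lra]. }
  apply HF_ge_minorant; [apply box_ind_lsc; exact Hv |].
  intros y1 y2 H1 H2. unfold box_ind.
  destruct (Rlt_dec (Rabs (y1 - x1)) d); [destruct (Rlt_dec (Rabs (y2 - x2)) d) |];
    [apply Hbox | apply Htilde_nonneg ..]; auto.
Qed.

Definition power_triangle (F : R -> ER) (a : R) : Prop :=
  forall r s t, 0 <= r -> 0 <= s -> 0 <= t ->
    ele (epow (persp F r t) a) (eplus (epow (persp F r s) a) (epow (persp F s t) a)).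

(* Passing through theta > 0: hat F(y1,y2) <= C (hat F(theta,y1) + hat F(theta,y2)),
   hence every lower bound w of hat F(y1,y2) gives the lower bound w/C of tilde H_F. *)
Lemma Htilde_lower_bound F a y1 y2 w : Gamma0s F -> 0 < a <= 1 -> power_triangle F a ->
  0 < y1 -> 0 <= y2 -> ele (Fin w) (persp F y1 y2) ->
  ele (Fin (w / Rpower 2 (/ a - 1))) (Htilde F y1 y2).
Proof.
  intros HF Ha Htri Hy1 Hy2 Hw.
  apply Htilde_ge; auto; [lra |]. intros th Hth.
  pose proof (Htri y1 th y2 ltac:(lra) ltac:(lra) Hy2) as Ht.
  rewrite (persp_sym F y1 th) in Ht by auto.
  apply ele_escal_div; [unfold Rpower; apply exp_pos |].
  apply (ele_trans _ _ _ Hw). apply epow_triangle_inv; auto; apply persp_nonneg; auto; lra.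
Qed.

Theorem mainTheorem3 (F : R -> ER) (a : R) :
  Gamma0s F -> 0 < a <= 1 ->
  (forall r s t, 0 <= r -> 0 <= s -> 0 <= t ->
     ele (epow (persp F r t) a)
         (eplus (epow (persp F r s) a) (epow (persp F s t) a))) ->
  forall s, 0 <= s -> ele (F s) (Ta a F s).
Proof.
  intros HF Ha Htri s Hs. unfold Ta.
  assert (HC : 0 < Rpower 2 (/ a - 1)) by (unfold Rpower; apply exp_pos).
  apply ele_escal_of_lower_bounds; auto.
  -
    apply (HF_ge_box F 1 s 1 0); auto; try lra.
    intros y1 y2 H1 H2 _ _. apply Htilde_nonneg; auto.
  - (* each w < F(s) = hat F(1,s) gives H_F(1,s) >= w/C *)
    intros w Hw Hws.
    destruct (persp_lsc_near_1 F s w HF Hs Hw Hws) as [d [Hd Hnear]].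
    apply (HF_ge_box F 1 s d); auto.
    { apply Rmult_le_pos; [lra | left; apply Rinv_0_lt_compat; exact HC]. }
    intros y1 y2 _ Hy2 Hb1 Hb2. destruct (Hnear y1 y2 Hy2 Hb1 Hb2) as [Hy1 Hpw].
    apply (Htilde_lower_bound F a); auto using eltR_ele.
Qed.
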